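(* Suppose $V:\mathbb R^2\to\mathbb R$ satisfies $(V_0)$ and $(V_2)$. Then $(\nabla V(x),x)\ge0$ for all $x\in\mathbb R^2$.
   Context: Condition $(V_0)$: $V\in L^1_{loc}(\mathbb R^2)$, $V_0:=\inf_{\mathbb R^2}V>0$, and the Lebesgue measure of $\{x\in\mathbb R^2: V(x)\le M\}$ is finite for every $M>0$. Condition $(V_2)$: $V\in C^1(\mathbb R^2,\mathbb R)$ and, with $\mathcal V(x):=V(x)-\frac12(\nabla V(x),x)$, for every $x\in\mathbb R^2$ the function $t\mapsto\mathcal V(tx)$ is nondecreasing on $(0,\infty)$. *)

From HB Require Import structures.
From mathcomp Require Import all_boot all_order all_algebra.
From mathcomp Require Import all_classical all_reals all_analysis.
Set Implicit Arguments. Unset Strict Implicit. Unset Printing Implicit Defensive.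
Import Order.TTheory GRing.Theory Num.Theory.
Import numFieldNormedType.Exports.
Local Open Scope classical_set_scope.
Local Open Scope ring_scope.

Definition lebesgue2 {R : realType} : set (R * R) -> \bar R :=
  (@lebesgue_measure R \x @lebesgue_measure R)%E.

Definition locally_integrable {R : realType} (V : R * R -> R) : Prop :=
  measurable_fun setT V /\
  forall K : set (R * R), compact K -> (@lebesgue2 R).-integrable K (EFin \o V).

Definition cond_V0 {R : realType} (V : R * R -> R) : Prop :=
  [/\ locally_integrable V,
      0 < inf (range V)
    & forall M : R, 0 < M -> (@lebesgue2 R [set x | (V x <= M)%R] < +oo)%E].

(* (nabla V(x), y) is the differential of V at x applied to y. *)
Definition gradV {R : realType} (V : R * R -> R) (x y : R * R) : R := 'd V x y.

(* V in C^1(R^2, R): differentiable everywhere, with continuous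
   directional derivatives x |-> (nabla V(x), v) for every direction v
   (equivalently, continuous partial derivatives). *)
Definition C1 {R : realType} (V : R * R -> R) : Prop :=
  (forall x, differentiable V x) /\
  (forall v : R * R, continuous (fun x => gradV V x v)).

Definition calV {R : realType} (V : R * R -> R) (x : R * R) : R :=
  V x - 2^-1 * gradV V x x.

Definition cond_V2 {R : realType} (V : R * R -> R) : Prop :=
  C1 V /\
  forall (x : R * R) (s t : R), 0 < s -> s <= t ->
    calV V (s *: x) <= calV V (t *: x).

From HB Require Import structures.
From mathcomp Require Import all_boot all_order all_algebra.
From mathcomp Require Import all_classical all_reals all_analysis.
From mathcomp Require Import ring lra.
Import Order.TTheory GRing.Theory Num.Theory.
Import numFieldNormedType.Exports.
Set Implicit Arguments. Unset Strict Implicit. Unset Printing Implicit Defensive.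
Local Open Scope ring_scope.

(* Along the ray t |-> t x put g(t) := V(t x), so that g'(t) = (nabla V(tx), x)
   and calV(tx) = g(t) - t g'(t) / 2 >= calV(x) =: c for t >= 1 by (V_2).
   This says exactly that (g(t) - c) / t^2 is nonincreasing on [1, +oo[, hence
   g(t) <= c + (g'(1) / 2) t^2.  If g'(1) < 0 the right-hand side eventually
   becomes negative, which contradicts V >= inf V > 0. *)

Lemma inf_range_gt0 (T : Type) (R : realType) (f : T -> R) :
  0 < inf (range f) -> forall y, 0 < f y.
Proof.
move=> inf_gt0 y.
have inf_f : has_inf (range f).
  by apply: contrapT => /inf_out inf0; rewrite inf0 ltxx in inf_gt0.
by apply: (lt_le_trans inf_gt0); apply: (ge_inf inf_f.2); exists y.
Qed.

Lemma is_derive_ray (R : realType) (U W : normedModType R) (f : U -> W)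
    (x : U) (t : R) :
  differentiable f (t *: x) ->
  is_derive t 1 (fun s : R => f (s *: x)) ('d f (t *: x) x).
Proof.
move=> df.
have dfx : differentiable (f \o ( *:%R^~ x)) t by apply: differentiable_comp.
apply: DeriveDef; first exact: diff_derivable.
by rewrite deriveE // diff_comp //= diff_val /= scale1r.
Qed.

Lemma quadratic_neg_eventually (R : realFieldType) (a c : R) :
  a < 0 -> exists2 y : R, 1 <= y & c + a * y ^+ 2 < 0.
Proof.
move=> a_lt0; pose y := 1 + `|c| / - a.
have y_ge1 : 1 <= y by rewrite /y lerDl divr_ge0 // oppr_ge0 ltW.
exists y => //.
have ay : a * y = a - `|c|.
  by rewrite /y mulrDr mulr1 mulrCA invrN mulrN divff ?lt_eqF // mulrN1.
have ay2 : a * y ^+ 2 <= a * y.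
  by rewrite expr2 ler_wnM2l ?ler_peMl ?(ltW a_lt0) // (le_trans ler01).
have := ler_norm c; lra.
Qed.

Section ray_growth.
Variables (R : realType) (g dg : R -> R) (c : R).
Hypothesis g_derive : forall t : R, 1 <= t -> is_derive t 1 g (dg t).
Hypothesis g_sub_half_derive : forall t : R, 1 <= t -> c <= g t - 2^-1 * (t * dg t).

Let F : R -> R := (g \- cst c) * (fun t => t^-1) ^+ 2.

Let F_derive (t : R) : 1 <= t ->
  is_derive t 1 F ((t * dg t - 2 * (g t - c)) / t ^+ 3).
Proof.
move=> t_ge1; have t_neq0 : t != 0 by rewrite gt_eqF // (lt_le_trans ltr01).
have inv_derive := @is_deriveV _ id _ _ _ t_neq0 (is_derive_id t 1).
apply: is_derive_eq.
  exact: is_deriveM (is_deriveB (g_derive t_ge1) _) (is_deriveX 2 inv_derive).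
by rewrite /GRing.scale !fctE /=; field.
Qed.

Let F_nonincreasing (t : R) : 1 <= t -> F t <= F 1.
Proof.
move=> t_ge1; apply: (@ler0_derive1_nincry _ F 1) => //.
- by move=> s; rewrite in_itv /= andbT => /ltW /F_derive [].
- move=> s; rewrite in_itv /= andbT => s_gt1.
  have s_ge0 : 0 <= s by exact: le_trans ler01 (ltW s_gt1).
  have := g_sub_half_derive (ltW s_gt1) => c_le.
  rewrite derive1E (@derive_val _ _ _ _ _ _ _ (F_derive (ltW s_gt1))).
  by rewrite mulr_le0_ge0 ?invr_ge0 ?exprn_ge0 //; lra.
- apply: derivable_within_continuous => s; rewrite in_itv /= andbT.
  by move=> /F_derive [].
Qed.

Lemma ray_growth_quadratic (t : R) : 1 <= t -> g t <= c + (g 1 - c) * t ^+ 2.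
Proof.
move=> t_ge1; have t_gt0 : 0 < t by exact: lt_le_trans ltr01 t_ge1.
have F_val s : F s = (g s - c) / s ^+ 2 by rewrite /F !fctE exprVn.
have := F_nonincreasing t_ge1.
by rewrite !F_val expr1n divr1 ler_pdivrMr ?exprn_gt0 // -lerBlDl.
Qed.

End ray_growth.

Theorem lemma5p1 (R : realType) (V : R * R -> R) :
  cond_V0 V -> cond_V2 V -> forall x : R * R, 0 <= gradV V x x.
Proof.
move=> [_ inf_gt0 _] [[dV _] calV_mono] x.
pose g s := V (s *: x); pose dg s := gradV V (s *: x) x.
have calV_ray t : calV V (t *: x) = g t - 2^-1 * (t * dg t).
  by rewrite /calV /gradV /g /dg; congr (_ - _ * _); exact: linearZ.
have g1 : g 1 - calV V x = 2^-1 * dg 1.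
  by rewrite -[in calV V x](scale1r x) calV_ray mul1r opprB addrC subrK.
have calV_ge t : 1 <= t -> calV V x <= g t - 2^-1 * (t * dg t).
  by rewrite -calV_ray -{1}[x]scale1r; exact: calV_mono.
have growth := ray_growth_quadratic (fun t _ => is_derive_ray (dV (t *: x))) calV_ge.
have -> : gradV V x x = dg 1 by rewrite /dg scale1r.
rewrite leNgt; apply/negP => dg1_lt0.
have [y y_ge1] := @quadratic_neg_eventually _ (2^-1 * dg 1) (calV V x) ltac:(lra).
apply/negP; rewrite -leNgt -g1.
exact: le_trans (ltW (inf_range_gt0 inf_gt0 (y *: x))) (growth y y_ge1).
Qed.
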